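(* Let $G=(V,E)$ be a simple undirected graph with node features $x_v\in\mathbb{R}$, $v\in V$, and consider the message passing neural network defined by $h_v^{(0)}=x_v$ and, for $\ell\ge 0$, $$h_v^{(\ell+1)}=\phi_\ell\Big(h_v^{(\ell)},\ \sum_{u\in V}\hat a_{vu}\,\psi_\ell\big(h_v^{(\ell)},h_u^{(\ell)}\big)\Big),$$ where $\phi_\ell,\psi_\ell:\mathbb{R}^2\to\mathbb{R}$ are differentiable. Let $i,s\in V$ with $s\in S_{r+1}(i)$ for some integer $r\ge 0$. If $|\nabla\phi_\ell|\le\alpha$ and $|\nabla\psi_\ell|\le\beta$ (i.e. all partial derivatives are bounded in absolute value by $\alpha$, resp. $\beta$) for all $0\le\ell\le r$, then $$\left|\frac{\partial h_i^{(r+1)}}{\partial x_s}\right|\le(\alpha\beta)^{r+1}\big(\hat A^{r+1}\big)_{is}.$$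
   Context: $A$ is the adjacency matrix of $G$, $D$ the diagonal degree matrix, and $\hat A=(\hat a_{uv})=(D+I)^{-1/2}(A+I)(D+I)^{-1/2}$ is the normalized augmented adjacency matrix. $d_G$ is the shortest-path distance and $S_r(i)=\{v\in V: d_G(i,v)=r\}$. *)

From HB Require Import structures.
From Stdlib Require Import Reals.
From mathcomp Require Import all_boot all_order all_algebra.
From mathcomp Require Import Rstruct.
From Coquelicot Require Import Coquelicot.

Set Implicit Arguments.
Unset Strict Implicit.
Unset Printing Implicit Defensive.

Import GRing.Theory Num.Theory.

Local Open Scope ring_scope.

Definition simple_graph (n : nat) (e : rel 'I_n) : Prop :=
  symmetric e /\ irreflexive e.

Definition adjmx (n : nat) (e : rel 'I_n) : 'M[R]_n :=
  \matrix_(i, j) (e i j)%:R.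

Definition deg (n : nat) (e : rel 'I_n) (i : 'I_n) : nat := #|[set j | e i j]|.

Definition degmx (n : nat) (e : rel 'I_n) : 'M[R]_n :=
  diag_mx (\row_i (deg e i)%:R).

Definition degI_invsqrt (n : nat) (e : rel 'I_n) : 'M[R]_n :=
  diag_mx (\row_i (Num.sqrt ((deg e i)%:R + 1))^-1).

Definition Ahat (n : nat) (e : rel 'I_n) : 'M[R]_n :=
  degI_invsqrt e *m (adjmx e + 1%:M) *m degI_invsqrt e.

Fixpoint walk (n : nat) (e : rel 'I_n) (k : nat) (i j : 'I_n) : Prop :=
  match k with
  | 0 => i = j
  | k'.+1 => exists u, e i u /\ walk e k' u j
  end.

Definition dist_eq (n : nat) (e : rel 'I_n) (i j : 'I_n) (k : nat) : Prop :=
  walk e k i j /\ forall m, (m < k)%N -> ~ walk e m i j.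

Definition sphere (n : nat) (e : rel 'I_n) (k : nat) (i : 'I_n) : 'I_n -> Prop :=
  fun v => dist_eq e i v k.

Fixpoint mpnn (n : nat) (e : rel 'I_n) (phi psi : nat -> R -> R -> R)
    (l : nat) (x : 'I_n -> R) : 'I_n -> R :=
  match l with
  | 0 => x
  | l'.+1 => fun v =>
      let h := mpnn e phi psi l' x in
      phi l' (h v) (\sum_(u < n) Ahat e v u * psi l' (h v) (h u))
  end.

Definition upd (n : nat) (x : 'I_n -> R) (s : 'I_n) (t : R) : 'I_n -> R :=
  fun v => if v == s then t else x v.

Definition diff_grad_bounded (f : R -> R -> R) (c : R) : Prop :=
  forall a b : R, exists lx ly : R,
    differentiable_pt_lim f a b lx ly /\ (Rabs lx <= c)%R /\ (Rabs ly <= c)%R.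

(* The input x_s can influence h_u^(l) only through walks of length at most l
   from u to s, so the derivative vanishes when d_G(u, s) > l.  Hence, when
   d_G(u, s) >= l + 1, the chain rule through layer l + 1 loses the self term,
   and every w with Ahat_{uw} <> 0 (u itself or a neighbour of u) still has
   d_G(w, s) >= l.  Induction on l bounds the derivative of h_u^(l+1) by
   alpha beta sum_w Ahat_{uw} (alpha beta)^l (Ahat^l)_{ws}
   = (alpha beta)^(l+1) (Ahat^(l+1))_{us}.  Only d_G(i, s) >= r + 1 is used. *)

From Stdlib Require Import Reals.
From mathcomp Require Import all_boot all_order all_algebra.
From mathcomp Require Import Rstruct.
From Coquelicot Require Import Coquelicot.

Set Implicit Arguments.
Unset Strict Implicit.
Unset Printing Implicit Defensive.

Import Order.TTheory GRing.Theory Num.Theory.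
Local Open Scope ring_scope.

Lemma is_derive_big (I : Type) (r : seq I) (F : I -> R -> R) (dF : I -> R) t0 :
  (forall i, is_derive (F i) t0 (dF i)) ->
  is_derive (fun t => \sum_(i <- r) F i t) t0 (\sum_(i <- r) dF i).
Proof.
move=> dFi; elim: r => [|a r IHr].
  rewrite big_nil; apply: (@is_derive_ext R_AbsRing R_NormedModule (fun _ => 0)).
    by move=> t; rewrite big_nil.
  exact: is_derive_const.
rewrite big_cons.
apply: (@is_derive_ext R_AbsRing R_NormedModule
          (fun t => F a t + \sum_(i <- r) F i t)).
  by move=> t; rewrite big_cons.
exact: is_derive_plus (dFi a) IHr.
Qed.

Lemma is_derive_comp_2d (f : R -> R -> R) (g1 g2 : R -> R) t0 lx ly d1 d2 :
  differentiable_pt_lim f (g1 t0) (g2 t0) lx ly ->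
  is_derive g1 t0 d1 -> is_derive g2 t0 d2 ->
  is_derive (fun t => f (g1 t) (g2 t)) t0 (lx * d1 + ly * d2).
Proof.
move=> df /is_derive_Reals dg1 /is_derive_Reals dg2; apply/is_derive_Reals.
exact: derivable_pt_lim_comp_2d.
Qed.

Lemma Ahat_entry n (e : rel 'I_n) u w :
  Ahat e u w = (Num.sqrt ((deg e u)%:R + 1))^-1 *
     ((e u w)%:R + (u == w)%:R) * (Num.sqrt ((deg e w)%:R + 1))^-1.
Proof. by rewrite /Ahat /degI_invsqrt mul_mx_diag mul_diag_mx !mxE. Qed.

Lemma Ahat_ge0 n (e : rel 'I_n) u w : 0 <= Ahat e u w.
Proof.
by rewrite Ahat_entry !mulr_ge0 ?addr_ge0 ?invr_ge0 ?sqrtr_ge0 ?ler0n.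
Qed.

Lemma Ahat_neq0 n (e : rel 'I_n) u w : Ahat e u w != 0 -> u = w \/ e u w.
Proof.
rewrite Ahat_entry; case: (e u w); first by right.
case: (eqVneq u w) => [->|_]; first by left.
by rewrite addr0 mulr0 mul0r eqxx.
Qed.

Lemma Ahat_exprS n (e : rel 'I_n) l u w :
  (Ahat e ^+ l.+1) u w = \sum_k Ahat e u k * (Ahat e ^+ l) k w.
Proof. by rewrite exprS -mulmxE mxE. Qed.

Definition dist_ge n (e : rel 'I_n) (u s : 'I_n) (k : nat) : Prop :=
  forall m, (m < k)%N -> ~ walk e m u s.

Lemma dist_geW n (e : rel 'I_n) u s k : dist_ge e u s k.+1 -> dist_ge e u s k.
Proof. by move=> far m /ltnW; exact: far. Qed.

Lemma dist_ge_Ahat n (e : rel 'I_n) u w s k :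
  Ahat e u w != 0 -> dist_ge e u s k.+1 -> dist_ge e w s k.
Proof.
move=> /Ahat_neq0 [<-|euw] far; first exact: dist_geW.
by move=> m lt_mk walk_w; apply: (far m.+1) => //; exists w.
Qed.

Section MessagePassingSensitivity.

Variables (n : nat) (e : rel 'I_n) (phi psi : nat -> R -> R -> R).
Variables (x : 'I_n -> R) (s : 'I_n).

Let h l t : 'I_n -> R := mpnn e phi psi l (upd x s t).

Lemma mpnn_upd_far l u t : dist_ge e u s l.+1 -> h l t u = mpnn e phi psi l x u.
Proof.
elim: l u => [|l IHl] u far /=.
  by rewrite /h /upd /=; case: eqP => // us; case: (far 0%N).
rewrite /h /= -/(h l t) (IHl u (dist_geW far)).
congr (phi l _ _); apply: eq_bigr => w _.
have [->|nz_uw] := eqVneq (Ahat e u w) 0; first by rewrite !mul0r.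
by rewrite (IHl w (dist_ge_Ahat nz_uw far)).
Qed.

Lemma Derive_mpnn_far l u t0 : dist_ge e u s l.+1 -> Derive (h l ^~ u) t0 = 0.
Proof.
move=> far; rewrite (Derive_ext _ (fun=> mpnn e phi psi l x u)) ?Derive_const //.
by move=> t; apply: mpnn_upd_far.
Qed.

Lemma is_derive_mpnn0 u t0 : is_derive (h 0 ^~ u) t0 (u == s)%:R.
Proof.
rewrite /h /upd /=; case: eqP => _; [exact: is_derive_id | exact: is_derive_const].
Qed.

(* lx, ly and mx w, my w are the partial derivatives of phi_l and psi_l at the
   points where layer l + 1 evaluates them. *)
Lemma is_derive_mpnnS l alpha beta t0 (d : 'I_n -> R) u :
  diff_grad_bounded (phi l) alpha -> diff_grad_bounded (psi l) beta ->
  (forall w, is_derive (h l ^~ w) t0 (d w)) ->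
  exists lx ly (mx my : 'I_n -> R),
    [/\ `|lx| <= alpha, `|ly| <= alpha,
        forall w, `|mx w| <= beta /\ `|my w| <= beta &
        is_derive (h l.+1 ^~ u) t0
          (lx * d u + ly * \sum_w Ahat e u w * (mx w * d u + my w * d w))].
Proof.
move=> dphi dpsi dh.
have [mx /fin_all_exists [my dpsi_w]] := fin_all_exists
  (fun w => dpsi (h l t0 u) (h l t0 w)).
pose agg t := \sum_w Ahat e u w * psi l (h l t u) (h l t w).
have dagg : is_derive agg t0
    (\sum_w Ahat e u w * (mx w * d u + my w * d w)).
  apply: is_derive_big => w; apply: is_derive_scal.
  by have [dw _] := dpsi_w w; exact: is_derive_comp_2d dw (dh u) (dh w).
have [lx [ly [du [lx_le ly_le]]]] := dphi (h l t0 u) (agg t0).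
exists lx, ly, mx, my; split; rewrite -?RabsE //.
- by move=> w; have [_ [mx_le my_le]] := dpsi_w w; split; rewrite -RabsE.
- exact: is_derive_comp_2d du (dh u) dagg.
Qed.

Lemma ex_derive_mpnn l alpha beta :
  (forall k, (k < l)%N ->
     diff_grad_bounded (phi k) alpha /\ diff_grad_bounded (psi k) beta) ->
  forall u t0, ex_derive (h l ^~ u) t0.
Proof.
elim: l => [|l IHl] bounded u t0; first by eexists; exact: is_derive_mpnn0.
have [dphi dpsi] := bounded l (ltnSn l).
have dh w := Derive_correct _ _ (IHl (fun k lt_kl => bounded k (ltnW lt_kl)) w t0).
have [lx [ly [mx [my [_ _ _ dhS]]]]] := is_derive_mpnnS u dphi dpsi dh.
by eexists; exact: dhS.
Qed.

Lemma Derive_mpnn_bound l alpha beta :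
  (forall k, (k < l)%N ->
     diff_grad_bounded (phi k) alpha /\ diff_grad_bounded (psi k) beta) ->
  forall u, dist_ge e u s l -> forall t0,
  `|Derive (h l ^~ u) t0| <= (alpha * beta) ^+ l * (Ahat e ^+ l) u s.
Proof.
elim: l => [|l IHl] bounded u far t0.
  by rewrite (is_derive_unique _ _ _ (is_derive_mpnn0 u t0)) !expr0 mul1r mxE normr_nat.
have bounded_l k (lt_kl : (k < l)%N) := bounded k (ltnW lt_kl).
have [dphi dpsi] := bounded l (ltnSn l).
pose d w := Derive (h l ^~ w) t0.
have dh w : is_derive (h l ^~ w) t0 (d w).
  exact: Derive_correct (ex_derive_mpnn bounded_l w t0).
have [lx [ly [mx [my [_ ly_le mxy_le dhS]]]]] := is_derive_mpnnS u dphi dpsi dh.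
have du0 : d u = 0 := Derive_mpnn_far t0 far.
have term_le w : `|Ahat e u w * (my w * d w)|
    <= beta * (Ahat e u w * ((alpha * beta) ^+ l * (Ahat e ^+ l) w s)).
  have [->|nz_uw] := eqVneq (Ahat e u w) 0; first by rewrite !mul0r normr0 mulr0.
  rewrite normrM (ger0_norm (Ahat_ge0 _ _ _)) [X in _ <= X]mulrCA.
  rewrite ler_wpM2l ?Ahat_ge0 // normrM.
  apply: ler_pM (normr_ge0 _) (normr_ge0 _) (mxy_le w).2 _.
  exact: IHl bounded_l w (dist_ge_Ahat nz_uw far) t0.
have sum_le : `|\sum_w Ahat e u w * (mx w * d u + my w * d w)|
    <= beta * ((alpha * beta) ^+ l * (Ahat e ^+ l.+1) u s).
  apply: le_trans (ler_norm_sum _ _ _) _.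
  rewrite Ahat_exprS !mulr_sumr; apply: ler_sum => w _.
  by rewrite du0 mulr0 add0r [_ ^+ l * _]mulrCA; exact: term_le.
rewrite (is_derive_unique _ _ _ dhS) {1}du0 mulr0 add0r normrM.
apply: le_trans (ler_pM (normr_ge0 _) (normr_ge0 _) ly_le sum_le) _.
by rewrite [(alpha * beta) ^+ l.+1]exprS !mulrA.
Qed.

End MessagePassingSensitivity.

Theorem lemma1 (n : nat) (e : rel 'I_n) (phi psi : nat -> R -> R -> R)
    (alpha beta : R) (r : nat) (i s : 'I_n) :
  simple_graph e ->
  sphere e r.+1 i s ->
  (forall l, (l <= r)%N ->
     diff_grad_bounded (phi l) alpha /\ diff_grad_bounded (psi l) beta) ->
  forall x : 'I_n -> R,
    ex_derive (fun t => mpnn e phi psi r.+1 (upd x s t) i) (x s) /\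
    Rle (Rabs (Derive (fun t => mpnn e phi psi r.+1 (upd x s t) i) (x s)))
        (Rmult (pow (Rmult alpha beta) r.+1) ((Ahat e ^+ r.+1)%R i s)).
Proof.
move=> _ [_ far] bounded x.
have bounded_r k : (k < r.+1)%N ->
    diff_grad_bounded (phi k) alpha /\ diff_grad_bounded (psi k) beta.
  by rewrite ltnS; exact: bounded.
split; first exact: ex_derive_mpnn bounded_r _ _.
apply/RleP; rewrite RabsE RmultE RpowE.
exact: Derive_mpnn_bound bounded_r _ far _.
Qed.
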